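(* Let $N\ge2$ and let $u\in C(S^{N-1},(0,\infty))$ be nonconstant and separable in $S^{N-1}$. Then there exist $M\in O(N)$ and $h_1,h_2\in[-1,1]$ such that: (i) $h_1>h_2$; (ii) $u_M^{-1}(\max_{S^{N-1}}u_M)=\{x\in S^{N-1}:x_N\ge h_1\}$ and $u_M^{-1}(\min_{S^{N-1}}u_M)=\{x\in S^{N-1}:x_N\le h_2\}$; (iii) for every $h\in[-1,1]$, $u_M$ is constant on $\{x\in S^{N-1}:x_N=h\}$; (iv) the function $\alpha\mapsto u_M(0_{N-2},\cos\alpha,\sin\alpha)$ is nonincreasing on $[\pi/2,3\pi/2]$.
   Context: $S^{N-1}$ is the unit sphere in $\mathbb{R}^N$ centered at $0$; $O(N)$ is the orthogonal group; for $M\in O(N)$, $u_M(x):=u(M^{-1}x)$; $0_k$ denotes the zero vector in $\mathbb{R}^k$. For an open half-space $H\subset\mathbb{R}^N$, $\sigma_H$ denotes the reflection across $\partial H$. A function $u\in C(S^{N-1},\mathbb{R})$ is separable in $S^{N-1}$ if for every open half-space $H\subset\mathbb{R}^N$ with $0\in\partial H$, either $u(x)\ge u(\sigma_Hx)$ for all $x\in H\cap S^{N-1}$, or $u(x)\le u(\sigma_Hx)$ for all $x\in H\cap S^{N-1}$. *)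

From Stdlib Require Import Reals Lra.
Open Scope R_scope.

(* Points of R^N are represented as functions nat -> R; only coordinates
   0..N-1 are meaningful. Coordinate x_k (1-based, paper) is x (k-1). *)
Definition vec := nat -> R.

Fixpoint sumN (n : nat) (f : nat -> R) : R :=
  match n with
  | O => 0
  | S m => sumN m f + f m
  end.

Definition dot (N : nat) (x y : vec) : R := sumN N (fun i => x i * y i).

Definition inRN (N : nat) (x : vec) : Prop := forall i, (N <= i)%nat -> x i = 0.

Definition sphere (N : nat) (x : vec) : Prop := inRN N x /\ dot N x x = 1.

Definition dist (N : nat) (x y : vec) : R :=
  sqrt (sumN N (fun i => (x i - y i) ^ 2)).

Definition cont_on_sphere (N : nat) (u : vec -> R) : Prop :=
  forall x, sphere N x -> forall eps, eps > 0 ->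
    exists delta, delta > 0 /\
      forall y, sphere N y -> dist N x y < delta -> Rabs (u y - u x) < eps.

Definition orthogonal (N : nat) (M : nat -> nat -> R) : Prop :=
  forall i j, (i < N)%nat -> (j < N)%nat ->
    sumN N (fun k => M k i * M k j) = if Nat.eqb i j then 1 else 0.

(* M^{-1} x = M^T x for orthogonal M. *)
Definition mat_inv_apply (N : nat) (M : nat -> nat -> R) (x : vec) : vec :=
  fun i => if Nat.ltb i N then sumN N (fun k => M k i * x k) else 0.

(* u_M(x) := u(M^{-1} x) *)
Definition rot (N : nat) (M : nat -> nat -> R) (u : vec -> R) : vec -> R :=
  fun x => u (mat_inv_apply N M x).

Definition reflect (N : nat) (a x : vec) : vec :=
  fun i => if Nat.ltb i N then x i - 2 * dot N a x / dot N a a * a i else 0.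

(* Separability: every open half-space H with 0 in its boundary is
   H = {x : <a,x> > 0} for some nonzero a in R^N. *)
Definition separable (N : nat) (u : vec -> R) : Prop :=
  forall a : vec, inRN N a -> dot N a a <> 0 ->
    (forall x, sphere N x -> dot N a x > 0 -> u x >= u (reflect N a x)) \/
    (forall x, sphere N x -> dot N a x > 0 -> u x <= u (reflect N a x)).

Definition circ_pt (N : nat) (t : R) : vec :=
  fun i => if Nat.eqb i (N - 2) then cos t
           else if Nat.eqb i (N - 1) then sin t else 0.

(* Call a direction a dominant for u when u(x) >= u(sigma_a x) on the half-space
   {<a, x> > 0}; separability says that a or -a is dominant for every a.  Integrating u
   against x |-> <a, x> over circles on the sphere shows that dominant directions are
   closed under addition, so they form a convex cone C such that C and -C cover R^N.
   Continuity of u makes C closed and, as soon as u is nonconstant, C is a closed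
   half-space {v : <v, e> >= 0}.  Hence u(x) <= u(y) whenever <x, e> <= <y, e>: then y - x
   is dominant and the reflection across (y - x)^perp swaps x and y.  After a Householder
   reflection taking e to the last axis, u_M is a nondecreasing function of x_N, continuous
   along a meridian, and its maximum and minimum sets are caps {x_N >= h1} and {x_N <= h2}
   by continuity. *)

From Pilot Require Import Defs.
From Coquelicot Require Import Coquelicot.
From Stdlib Require Import Reals Lra Lia FunctionalExtensionality Classical ClassicalEpsilon.
Open Scope R_scope.

(** * Vectors and reflections *)

Lemma sumN_ext n f g : (forall i, (i < n)%nat -> f i = g i) -> sumN n f = sumN n g.
Proof.
  induction n as [|n IH]; simpl; intros H; auto.
  rewrite IH by (intros; apply H; lia). rewrite H by lia. reflexivity.
Qed.

Lemma sumN_plus n f g : sumN n (fun i => f i + g i) = sumN n f + sumN n g.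
Proof. induction n as [|n IH]; simpl; [lra|]. rewrite IH. lra. Qed.

Lemma sumN_scal n c f : sumN n (fun i => c * f i) = c * sumN n f.
Proof. induction n as [|n IH]; simpl; [lra|]. rewrite IH. lra. Qed.

Lemma sumN_zero n : sumN n (fun _ => 0) = 0.
Proof. induction n as [|n IH]; simpl; lra. Qed.

Lemma sumN_nonneg n f : (forall i, (i < n)%nat -> 0 <= f i) -> 0 <= sumN n f.
Proof.
  induction n as [|n IH]; simpl; intros H; [lra|].
  assert (0 <= f n) by (apply H; lia).
  assert (0 <= sumN n f) by (apply IH; intros; apply H; lia). lra.
Qed.

Lemma sumN_nonneg_eq0 n f : (forall i, (i < n)%nat -> 0 <= f i) -> sumN n f = 0 ->
  forall i, (i < n)%nat -> f i = 0.
Proof.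
  induction n as [|n IH]; simpl; intros H Hs i Hi; [lia|].
  assert (0 <= f n) by (apply H; lia).
  assert (0 <= sumN n f) by (apply sumN_nonneg; intros; apply H; lia).
  destruct (Nat.eq_dec i n) as [->|]; [lra|].
  apply IH; [intros; apply H; lia | lra | lia].
Qed.

Definition vadd (x y : vec) : vec := fun i => x i + y i.
Definition vscal (c : R) (x : vec) : vec := fun i => c * x i.
Definition vsub (x y : vec) : vec := fun i => x i - y i.
Definition basis (k : nat) : vec := fun i => if Nat.eqb i k then 1 else 0.

Ltac vec_ring := apply functional_extensionality; intro; unfold vadd, vscal, vsub; ring.

Lemma sumN_basis n k f : (k < n)%nat -> sumN n (fun i => basis k i * f i) = f k.
Proof.
  unfold basis. induction n as [|n IH]; simpl; intros H; [lia|].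
  destruct (Nat.eq_dec k n) as [->|].
  - rewrite Nat.eqb_refl, (sumN_ext _ _ (fun _ => 0)), sumN_zero; [lra|].
    intros i Hi. destruct (Nat.eqb_spec i n); [lia|lra].
  - rewrite IH by lia. destruct (Nat.eqb_spec n k); [lia|lra].
Qed.

Lemma dot_comm N x y : dot N x y = dot N y x.
Proof. unfold dot. apply sumN_ext; intros; ring. Qed.

Lemma dot_add_l N x y z : dot N (vadd x y) z = dot N x z + dot N y z.
Proof. unfold dot, vadd. rewrite <- sumN_plus. apply sumN_ext; intros; ring. Qed.

Lemma dot_add_r N x y z : dot N z (vadd x y) = dot N z x + dot N z y.
Proof. rewrite dot_comm, dot_add_l, (dot_comm N x), (dot_comm N y). reflexivity. Qed.

Lemma dot_scal_l N c x y : dot N (vscal c x) y = c * dot N x y.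
Proof. unfold dot, vscal. rewrite <- sumN_scal. apply sumN_ext; intros; ring. Qed.

Lemma dot_scal_r N c x y : dot N y (vscal c x) = c * dot N y x.
Proof. rewrite dot_comm, dot_scal_l, dot_comm. reflexivity. Qed.

Lemma dot_sub_l N x y z : dot N (vsub x y) z = dot N x z - dot N y z.
Proof.
  replace (vsub x y) with (vadd x (vscal (-1) y)) by vec_ring.
  rewrite dot_add_l, dot_scal_l. ring.
Qed.

Lemma dot_sub_r N x y z : dot N z (vsub x y) = dot N z x - dot N z y.
Proof. rewrite dot_comm, dot_sub_l, (dot_comm N x), (dot_comm N y). reflexivity. Qed.

Lemma dot_zero_l N x : dot N (fun _ => 0) x = 0.
Proof. unfold dot. rewrite (sumN_ext _ _ (fun _ => 0)) by (intros; ring). apply sumN_zero. Qed.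

Lemma dot_basis_r N x k : (k < N)%nat -> dot N x (basis k) = x k.
Proof.
  intros Hk. unfold dot. rewrite <- (sumN_basis N k x Hk).
  apply sumN_ext; intros; ring.
Qed.

Lemma dot_self_nonneg N x : 0 <= dot N x x.
Proof. apply sumN_nonneg; intros; nra. Qed.

Lemma inRN_add N x y : inRN N x -> inRN N y -> inRN N (vadd x y).
Proof. intros Hx Hy i Hi. unfold vadd. rewrite Hx, Hy by auto. ring. Qed.

Lemma inRN_scal N c x : inRN N x -> inRN N (vscal c x).
Proof. intros Hx i Hi. unfold vscal. rewrite Hx by auto. ring. Qed.

Lemma inRN_sub N x y : inRN N x -> inRN N y -> inRN N (vsub x y).
Proof. intros Hx Hy i Hi. unfold vsub. rewrite Hx, Hy by auto. ring. Qed.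

Lemma inRN_basis N k : (k < N)%nat -> inRN N (basis k).
Proof. intros Hk i Hi. unfold basis. destruct (Nat.eqb_spec i k); [lia | reflexivity]. Qed.

Lemma dot_self_eq0 N x : inRN N x -> dot N x x = 0 -> x = (fun _ => 0).
Proof.
  intros Hx H. apply functional_extensionality; intros i.
  destruct (Nat.lt_ge_cases i N) as [Hi|Hi]; [|apply Hx; auto].
  assert (x i * x i = 0) by (apply (sumN_nonneg_eq0 N (fun i => x i * x i)); auto; intros; nra).
  nra.
Qed.

Lemma dot_self_pos N x : inRN N x -> x <> (fun _ => 0) -> 0 < dot N x x.
Proof.
  intros Hx Hne. destruct (Req_dec (dot N x x) 0) as [E|E].
  - contradiction (dot_self_eq0 N x Hx E).
  - pose proof (dot_self_nonneg N x). lra.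
Qed.

Lemma sphere_basis N k : (k < N)%nat -> sphere N (basis k).
Proof.
  intros Hk. split; [apply inRN_basis; auto|].
  rewrite dot_basis_r by auto. unfold basis. rewrite Nat.eqb_refl. reflexivity.
Qed.

Lemma dot_sphere_le N x y : sphere N x -> sphere N y -> dot N x y <= 1.
Proof.
  intros [_ Hxx] [_ Hyy]. pose proof (dot_self_nonneg N (vsub x y)) as H.
  rewrite dot_sub_l, !dot_sub_r, (dot_comm N y x) in H. lra.
Qed.

Lemma dot_sphere_ge N x y : sphere N x -> sphere N y -> -1 <= dot N x y.
Proof.
  intros [_ Hxx] [_ Hyy]. pose proof (dot_self_nonneg N (vadd x y)) as H.
  rewrite dot_add_l, !dot_add_r, (dot_comm N y x) in H. lra.
Qed.

Lemma sphere_coord_bound N x i : sphere N x -> (i < N)%nat -> -1 <= x i <= 1.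
Proof.
  intros Sx Hi. pose proof (sphere_basis N i Hi) as Se.
  pose proof (dot_sphere_le N x _ Sx Se). pose proof (dot_sphere_ge N x _ Sx Se).
  rewrite dot_basis_r in * by auto. lra.
Qed.

Lemma sphere_eq_of_dot N x y : sphere N x -> sphere N y -> dot N x y = 1 -> x = y.
Proof.
  intros [Hx Hxx] [Hy Hyy] H.
  assert (E : vsub x y = (fun _ => 0)).
  { apply (dot_self_eq0 N); [apply inRN_sub; auto|].
    rewrite dot_sub_l, !dot_sub_r, (dot_comm N y x). lra. }
  apply functional_extensionality; intros i.
  apply (f_equal (fun v => v i)) in E. unfold vsub in E. lra.
Qed.

Lemma reflect_eq N a x : inRN N a -> inRN N x ->
  reflect N a x = vsub x (vscal (2 * dot N a x / dot N a a) a).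
Proof.
  intros Ha Hx. apply functional_extensionality; intros i. unfold reflect, vsub, vscal.
  destruct (Nat.ltb_spec i N); [ring|]. rewrite Ha, Hx by auto. ring.
Qed.

Lemma inRN_reflect N a x : inRN N (reflect N a x).
Proof. intros i Hi. unfold reflect. destruct (Nat.ltb_spec i N); [lia | reflexivity]. Qed.

(* Rocq's [/ 0 = 0] makes the reflection across the zero vector the identity. *)
Lemma reflect_degenerate N a x : inRN N x -> dot N a a = 0 -> reflect N a x = x.
Proof.
  intros Hx E. apply functional_extensionality; intro i. unfold reflect. rewrite E.
  destruct (Nat.ltb_spec i N); [unfold Rdiv; rewrite Rinv_0; ring | rewrite Hx; auto].
Qed.

Lemma reflect_scal N c a x : c <> 0 -> reflect N (vscal c a) x = reflect N a x.
Proof.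
  intros Hc. unfold reflect. apply functional_extensionality; intros i.
  destruct (i <? N)%nat; [|reflexivity].
  rewrite !dot_scal_l, !dot_scal_r. unfold vscal.
  destruct (Req_dec (dot N a a) 0) as [E|E].
  - rewrite E. unfold Rdiv. rewrite !Rmult_0_r, Rinv_0. ring.
  - field. auto.
Qed.

Section Reflection.
Variables (N : nat) (a : vec).
Hypotheses (Ha : inRN N a) (Haa : dot N a a <> 0).

Lemma dot_reflect_normal x : inRN N x -> dot N a (reflect N a x) = - dot N a x.
Proof. intros. rewrite reflect_eq, dot_sub_r, dot_scal_r by auto. field. auto. Qed.

Lemma dot_reflect x y : inRN N x -> inRN N y -> dot N (reflect N a x) y = dot N x (reflect N a y).
Proof.
  intros. rewrite !reflect_eq, dot_sub_l, dot_sub_r, dot_scal_l, dot_scal_r by auto.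
  rewrite (dot_comm N x a). field. auto.
Qed.

Lemma reflect_involutive x : inRN N x -> reflect N a (reflect N a x) = x.
Proof.
  intros. rewrite (reflect_eq N a (reflect N a x)), dot_reflect_normal, reflect_eq
    by (auto; apply inRN_reflect).
  apply functional_extensionality; intros i. unfold vsub, vscal. field. auto.
Qed.

Lemma sphere_reflect x : sphere N x -> sphere N (reflect N a x).
Proof.
  intros [Hx Hxx]. split; [apply inRN_reflect|].
  rewrite dot_reflect, reflect_involutive by (auto; apply inRN_reflect). auto.
Qed.

End Reflection.

Lemma sphere_reflect_any N a x : inRN N a -> sphere N x -> sphere N (reflect N a x).
Proof.
  intros Ha Sx. destruct (Req_dec (dot N a a) 0) as [E|E].
  - rewrite reflect_degenerate by (auto; apply Sx). auto.
  - apply sphere_reflect; auto.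
Qed.

Lemma reflect_involutive_any N a x : inRN N a -> inRN N x -> reflect N a (reflect N a x) = x.
Proof.
  intros Ha Hx. destruct (Req_dec (dot N a a) 0) as [E|E].
  - rewrite !reflect_degenerate by (auto; apply inRN_reflect). reflexivity.
  - apply reflect_involutive; auto.
Qed.

Section Swap.
Variables (N : nat) (x y : vec).
Hypotheses (Sx : sphere N x) (Sy : sphere N y) (Hxy : x <> y).

Lemma dot_swap_pos : dot N (vsub x y) x > 0.
Proof.
  pose proof (dot_sphere_le N y x Sy Sx). destruct Sx as [Hx Hxx].
  rewrite dot_sub_l, Hxx. destruct (Req_dec (dot N y x) 1) as [E|E]; [|lra].
  exfalso. apply Hxy. symmetry. apply (sphere_eq_of_dot N); auto.
Qed.

Lemma reflect_swap : reflect N (vsub x y) x = y.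
Proof.
  pose proof dot_swap_pos as Hpos. destruct Sx as [Hx Hxx], Sy as [Hy Hyy].
  assert (E : dot N (vsub x y) (vsub x y) = 2 * dot N (vsub x y) x).
  { rewrite !dot_sub_l, !dot_sub_r, (dot_comm N y x). lra. }
  rewrite reflect_eq, E by (auto; apply inRN_sub; auto).
  set (d := dot N (vsub x y) x) in *.
  apply functional_extensionality; intros i. unfold vsub, vscal. field. lra.
Qed.

End Swap.

(** * Dominant directions *)

Lemma continuity_pt_of_ex_derive (f : R -> R) x : ex_derive f x -> continuity_pt f x.
Proof. intros H. apply continuity_pt_filterlim. exact (ex_derive_continuous f x H). Qed.

Lemma continuity_pt_sumN n (F : R -> nat -> R) s0 :
  (forall i, (i < n)%nat -> continuity_pt (fun s => F s i) s0) ->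
  continuity_pt (fun s => sumN n (F s)) s0.
Proof.
  induction n as [|n IH]; simpl; intros H.
  - apply continuity_pt_const. intros ? ?. reflexivity.
  - apply (continuity_pt_plus (fun s => sumN n (F s)) (fun s => F s n));
      [apply IH; intros; apply H | apply H]; lia.
Qed.

Lemma locally_pos (f : R -> R) x : continuity_pt f x -> 0 < f x -> locally x (fun y => 0 < f y).
Proof.
  intros Hc Hx. apply (filter_imp (fun y => Rabs (f y - f x) < mkposreal _ Hx)).
  - simpl. intros y Hy. apply Rabs_def2 in Hy. lra.
  - apply continuity_pt_locally, Hc.
Qed.

Lemma locally_pos_point (P : R -> Prop) : locally 0 P -> exists s, 0 < s /\ P s.
Proof.
  intros [eps H]. pose proof (cond_pos eps). exists (eps / 2). split; [lra|].
  apply H. change (Rabs (eps / 2 - 0) < eps). rewrite Rminus_0_r, Rabs_right; lra.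
Qed.

Lemma cont_on_sphere_curve N u (Hc : cont_on_sphere N u) (c : R -> vec) s0 :
  sphere N (c s0) -> (forall i, (i < N)%nat -> continuity_pt (fun s => c s i) s0) ->
  forall eps, eps > 0 ->
  locally s0 (fun s => sphere N (c s) -> Rabs (u (c s) - u (c s0)) < eps).
Proof.
  intros S0 Hci eps He. destruct (Hc _ S0 eps He) as [d [Hd Hu]].
  set (q := fun s => sumN N (fun i => (c s0 i - c s i) ^ 2)).
  assert (Hq : continuity_pt q s0).
  { apply (continuity_pt_sumN N (fun s i => (c s0 i - c s i) ^ 2)). intros i Hi.
    apply continuity_pt_comp with (f2 := fun y => (c s0 i - y) ^ 2); [apply Hci; auto|].
    apply continuity_pt_of_ex_derive. auto_derive. auto. }
  assert (Hq0 : q s0 = 0).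
  { unfold q. rewrite (sumN_ext _ _ (fun _ => 0)) by (intros; ring). apply sumN_zero. }
  apply (filter_imp (fun s => 0 < d ^ 2 - q s)).
  - intros s Hs Ss. apply Hu; auto. unfold Defs.dist.
    rewrite <- (sqrt_pow2 d) by lra. apply sqrt_lt_1_alt. split; [|fold (q s); lra].
    apply sumN_nonneg; intros; apply pow2_ge_0.
  - apply locally_pos.
    + apply continuity_pt_minus; [apply continuity_pt_const; intros ? ?; reflexivity | exact Hq].
    + rewrite Hq0. nra.
Qed.

Definition dominant N (u : vec -> R) (a : vec) : Prop :=
  forall x, sphere N x -> dot N a x > 0 -> u x >= u (reflect N a x).

Lemma dominant_zero N u : dominant N u (fun _ => 0).
Proof. intros x _ H. rewrite dot_zero_l in H. lra. Qed.

Lemma dominant_scal N u c a : c > 0 -> dominant N u a -> dominant N u (vscal c a).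
Proof.
  intros Hc H x Sx Hx. rewrite reflect_scal by lra. apply H; auto.
  rewrite dot_scal_l in Hx. nra.
Qed.

Lemma dominant_or_opp N u a : separable N u -> inRN N a ->
  dominant N u a \/ dominant N u (vscal (-1) a).
Proof.
  intros Hsep Ha. destruct (Req_dec (dot N a a) 0) as [E|E].
  { left. rewrite (dot_self_eq0 N a Ha E). apply dominant_zero. }
  destruct (Hsep a Ha E) as [H|H]; [left; exact H | right].
  intros x Sx Hx. rewrite reflect_scal by lra. rewrite dot_scal_l in Hx.
  pose proof (H _ (sphere_reflect N a Ha E x Sx)) as T.
  rewrite dot_reflect_normal, reflect_involutive in T by (auto; apply Sx). apply Rle_ge, T. lra.
Qed.

Lemma not_dominant_witness N u a : ~ dominant N u a ->
  exists z, sphere N z /\ dot N a z > 0 /\ u z < u (reflect N a z).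
Proof.
  intros H. apply NNPP. intro C. apply H. intros x Sx Hx.
  apply Rnot_lt_ge. intro L. apply C. exists x; auto.
Qed.

Lemma continuity_pt_reflect_line N d x z i : inRN N d -> inRN N x -> dot N d d <> 0 ->
  continuity_pt (fun s => reflect N (vadd d (vscal s x)) z i) 0.
Proof.
  intros Hd Hx Hdd. unfold reflect. destruct (Nat.ltb_spec i N).
  - apply continuity_pt_ext with (f := fun s => z i - 2 * (dot N d z + s * dot N x z)
      / (dot N d d + 2 * s * dot N d x + s * s * dot N x x) * (d i + s * x i)).
    { intros s. rewrite !dot_add_l, !dot_add_r, !dot_scal_l, !dot_scal_r, (dot_comm N x d).
      unfold vadd, vscal. f_equal. f_equal. f_equal. ring. }
    apply continuity_pt_of_ex_derive. auto_derive.
    replace (dot N d d + 2 * 0 * dot N d x + 0 * 0 * dot N x x) with (dot N d d) by ring. auto.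
  - apply continuity_pt_const. intros ? ?. reflexivity.
Qed.

Section Dominance.
Variables (N : nat) (u : vec -> R).
Hypotheses (Hc : cont_on_sphere N u) (Hsep : separable N u).

(* Being non-dominant is witnessed by one point z, and both [<d, z> > 0] and the strict
   inequality survive small perturbations of d. *)
Lemma not_dominant_locally d x : inRN N d -> inRN N x -> ~ dominant N u d ->
  locally 0 (fun s => ~ dominant N u (vadd d (vscal s x))).
Proof.
  intros Hd Hx H. destruct (not_dominant_witness N u d H) as [z [Sz [Hz Huz]]].
  assert (Hdd : dot N d d <> 0).
  { intro E. rewrite (dot_self_eq0 N d Hd E), dot_zero_l in Hz. lra. }
  set (c := fun s => reflect N (vadd d (vscal s x)) z).
  assert (Hc0 : c 0 = reflect N d z) by (unfold c; f_equal; vec_ring).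
  assert (Hline : forall s, inRN N (vadd d (vscal s x))).
  { intros. apply inRN_add, inRN_scal; auto. }
  assert (Hside : locally 0 (fun s => 0 < dot N (vadd d (vscal s x)) z)).
  { apply locally_pos.
    - apply continuity_pt_ext with (f := fun s => dot N d z + s * dot N x z).
      { intros. rewrite dot_add_l, dot_scal_l. reflexivity. }
      apply continuity_pt_of_ex_derive. auto_derive. auto.
    - rewrite dot_add_l, dot_scal_l. lra. }
  assert (Hval := cont_on_sphere_curve N u Hc c 0 ltac:(rewrite Hc0; apply sphere_reflect; auto)
    ltac:(intros; apply continuity_pt_reflect_line; auto) (u (reflect N d z) - u z) ltac:(lra)).
  generalize (filter_and _ _ Hside Hval). apply filter_imp.
  intros s [Hpos Hclose] Hdom. rewrite Hc0 in Hclose.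
  specialize (Hclose (sphere_reflect_any N _ z (Hline s) Sz)).
  specialize (Hdom z Sz Hpos). unfold c in Hclose. apply Rabs_def2 in Hclose. lra.
Qed.

Lemma dominant_closed v x : inRN N v -> inRN N x ->
  (forall s, s > 0 -> dominant N u (vadd v (vscal s x))) -> dominant N u v.
Proof.
  intros Hv Hx H. apply NNPP. intro C.
  destruct (locally_pos_point _ (not_dominant_locally v x Hv Hx C)) as [s [Hs Hns]].
  exact (Hns (H s Hs)).
Qed.

Lemma dominant_locally a x : inRN N a -> inRN N x -> ~ dominant N u (vscal (-1) a) ->
  locally 0 (fun s => dominant N u (vadd a (vscal s x))).
Proof.
  intros Ha Hx H.
  generalize (not_dominant_locally _ (vscal (-1) x) (inRN_scal N _ _ Ha) (inRN_scal N _ _ Hx) H).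
  apply filter_imp. intros s Hs.
  destruct (dominant_or_opp N u (vadd a (vscal s x)) Hsep) as [P|P];
    [apply inRN_add, inRN_scal; auto | exact P |].
  exfalso. apply Hs. replace (vadd (vscal (-1) a) (vscal s (vscal (-1) x)))
    with (vscal (-1) (vadd a (vscal s x))) by vec_ring. exact P.
Qed.
End Dominance.

(** * Cones containing a half-space *)

Lemma le_of_forall_lt x y : (forall t, t < x -> t <= y) -> x <= y.
Proof.
  intros H. apply Rnot_lt_le. intro L. specialize (H ((x + y) / 2) ltac:(lra)). lra.
Qed.

Definition truncate (k : nat) (v : vec) : vec := fun i => if Nat.ltb i k then v i else 0.

Lemma linear_functional_dot N (f : vec -> R) :
  (forall v w, inRN N v -> inRN N w -> f (vadd v w) = f v + f w) ->
  (forall c v, inRN N v -> f (vscal c v) = c * f v) ->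
  forall v, inRN N v -> f v = dot N v (fun i => if Nat.ltb i N then f (basis i) else 0).
Proof.
  intros Hadd Hscal v Hv.
  assert (Htrunc : forall k, (k <= N)%nat ->
    f (truncate k v) = sumN k (fun i => v i * (if Nat.ltb i N then f (basis i) else 0))).
  { induction k as [|k IH]; intros Hk.
    - replace (truncate 0 v) with (vscal 0 v); [rewrite Hscal by auto; simpl; ring|].
      apply functional_extensionality; intro i. unfold truncate, vscal.
      destruct (Nat.ltb_spec i 0); [lia | ring].
    - replace (truncate (S k) v) with (vadd (truncate k v) (vscal (v k) (basis k))).
      + assert (Hk' : inRN N (truncate k v)).
        { intros i Hi. unfold truncate. destruct (Nat.ltb_spec i k); [lia | reflexivity]. }
        rewrite Hadd, Hscal, IH by (try apply inRN_scal; try apply inRN_basis; auto; lia).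
        simpl. destruct (Nat.ltb_spec k N); [reflexivity | lia].
      + apply functional_extensionality; intro i. unfold truncate, vadd, vscal, basis.
        destruct (Nat.ltb_spec i (S k)), (Nat.ltb_spec i k), (Nat.eqb_spec i k);
          subst; try lia; ring. }
  replace v with (truncate N v) at 1; [apply Htrunc; lia|].
  apply functional_extensionality; intro i. unfold truncate.
  destruct (Nat.ltb_spec i N); [reflexivity | symmetry; apply Hv; lia].
Qed.

Section HalfSpace.
Variables (N : nat) (C : vec -> Prop) (a : vec).
Hypotheses (Ha : inRN N a)
  (C_add : forall v w, inRN N v -> inRN N w -> C v -> C w -> C (vadd v w))
  (C_scal : forall c v, c > 0 -> C v -> C (vscal c v))
  (C_total : forall v, inRN N v -> C v \/ C (vscal (-1) v))
  (C_locally : forall x, inRN N x -> locally 0 (fun s => C (vadd a (vscal s x))))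
  (C_opp : ~ C (vscal (-1) a))
  (C_closed : forall v, inRN N v -> (forall s, s > 0 -> C (vadd v (vscal s a))) -> C v).

Definition slack (v : vec) (t : R) : Prop := C (vadd v (vscal (- t) a)).

Lemma C_scal_iff c v : c > 0 -> C (vscal c v) <-> C v.
Proof.
  intros Hc. split; [|apply C_scal; auto].
  intros H. replace v with (vscal (/ c) (vscal c v)).
  - apply C_scal; auto. apply Rinv_0_lt_compat; auto.
  - apply functional_extensionality; intro i. unfold vscal. field. lra.
Qed.

Lemma not_C_neg_multiple c : c > 0 -> ~ C (vscal (- c) a).
Proof.
  intros Hc H. apply C_opp. apply (C_scal_iff c); auto.
  replace (vscal c (vscal (-1) a)) with (vscal (- c) a) by vec_ring. exact H.
Qed.

Lemma inRN_shift v t : inRN N v -> inRN N (vadd v (vscal t a)).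
Proof. intros. apply inRN_add, inRN_scal; auto. Qed.

Lemma C_a : C a.
Proof. destruct (C_total a Ha) as [H|H]; [exact H | contradiction]. Qed.

Lemma slack_down v t t' : inRN N v -> slack v t -> t' <= t -> slack v t'.
Proof.
  intros Hv Ht Hle. unfold slack in *. destruct (Req_dec t t') as [<-|]; auto.
  replace (vadd v (vscal (- t') a)) with (vadd (vadd v (vscal (- t) a)) (vscal (t - t') a))
    by vec_ring.
  apply C_add; [apply inRN_shift | apply inRN_scal | | apply C_scal]; auto; [lra | apply C_a].
Qed.

Lemma slack_nonempty v : inRN N v -> exists t, slack v t.
Proof.
  intros Hv. destruct (locally_pos_point _ (C_locally v Hv)) as [s [Hs H]].
  exists (- / s). apply (C_scal_iff s); auto.
  replace (vscal s (vadd v (vscal (- - / s) a))) with (vadd a (vscal s v)); auto.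
  apply functional_extensionality; intro i. unfold vadd, vscal. field. lra.
Qed.

Lemma slack_bounded v : inRN N v -> exists B, forall t, slack v t -> t <= B.
Proof.
  intros Hv. destruct (locally_pos_point _ (C_locally _ (inRN_scal N (-1) v Hv)))
    as [s [Hs H]].
  assert (Hw : C (vadd (vscal (-1) v) (vscal (/ s) a))).
  { apply (C_scal_iff s); auto.
    replace (vscal s (vadd (vscal (-1) v) (vscal (/ s) a))) with (vadd a (vscal s (vscal (-1) v)));
      auto.
    apply functional_extensionality; intro i. unfold vadd, vscal. field. lra. }
  exists (/ s). intros t Ht. apply Rnot_lt_le. intro L.
  apply (not_C_neg_multiple (t - / s)); [lra|].
  replace (vscal (- (t - / s)) a)
    with (vadd (vadd v (vscal (- t) a)) (vadd (vscal (-1) v) (vscal (/ s) a))) by vec_ring.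
  apply C_add; auto; [apply inRN_shift | apply inRN_shift, inRN_scal]; auto.
Qed.

(* The functional that will turn out to be [v |-> <v, e>]. *)
Definition level (v : vec) : R := epsilon (inhabits 0) (is_lub (slack v)).

Lemma level_lub v : inRN N v -> is_lub (slack v) (level v).
Proof.
  intros Hv. unfold level. apply epsilon_spec.
  destruct (completeness (slack v)) as [m Hm]; [| apply slack_nonempty, Hv | exists m; exact Hm].
  destruct (slack_bounded v Hv) as [B HB]. exists B. exact HB.
Qed.

Lemma slack_le_level v t : inRN N v -> slack v t -> t <= level v.
Proof. intros Hv. apply (level_lub v Hv). Qed.

Lemma level_le v B : inRN N v -> (forall t, slack v t -> t <= B) -> level v <= B.
Proof. intros Hv. apply (level_lub v Hv). Qed.

Lemma slack_lt_level v t : inRN N v -> t < level v -> slack v t.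
Proof.
  intros Hv Ht. apply NNPP. intro Hn.
  assert (level v <= t); [|lra].
  apply level_le; auto. intros t' Ht'. apply Rnot_lt_le. intro L.
  apply Hn, (slack_down v t'); auto; lra.
Qed.

Lemma level_superadditive v w : inRN N v -> inRN N w -> level v + level w <= level (vadd v w).
Proof.
  intros Hv Hw. apply le_of_forall_lt. intros t Ht.
  set (g := (level v + level w - t) / 2).
  apply slack_le_level; [apply inRN_add; auto|].
  assert (Sv : slack v (level v - g)) by (apply slack_lt_level; unfold g; auto; lra).
  assert (Sw : slack w (level w - g)) by (apply slack_lt_level; unfold g; auto; lra).
  unfold slack in *.
  replace (vadd (vadd v w) (vscal (- t) a))
    with (vadd (vadd v (vscal (- (level v - g)) a)) (vadd w (vscal (- (level w - g)) a)))
    by (apply functional_extensionality; intro; unfold g, vadd, vscal; field).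
  apply C_add; auto; apply inRN_shift; auto.
Qed.

Lemma level_opp v : inRN N v -> level (vscal (-1) v) = - level v.
Proof.
  intros Hv. pose proof (inRN_scal N (-1) v Hv) as Hv'. apply Rle_antisym.
  - assert (level v + level (vscal (-1) v) <= 0); [|lra].
    apply le_of_forall_lt. intros t Ht.
    set (g := (level v + level (vscal (-1) v) - t) / 2).
    assert (Sv : slack v (level v - g)) by (apply slack_lt_level; unfold g; auto; lra).
    assert (Sv' : slack (vscal (-1) v) (level (vscal (-1) v) - g))
      by (apply slack_lt_level; unfold g; auto; lra).
    apply Rnot_lt_le. intro L. apply (not_C_neg_multiple t); auto.
    unfold slack in *.
    replace (vscal (- t) a) with (vadd (vadd v (vscal (- (level v - g)) a))
      (vadd (vscal (-1) v) (vscal (- (level (vscal (-1) v) - g)) a)))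
      by (apply functional_extensionality; intro; unfold g, vadd, vscal; field).
    apply C_add; auto; apply inRN_shift; auto.
  - apply le_of_forall_lt. intros t Ht. apply slack_le_level; auto.
    destruct (C_total (vadd v (vscal t a))) as [Hc|Hc]; [apply inRN_shift; auto| |].
    + exfalso. assert (- t <= level v); [|lra].
      apply slack_le_level; auto. unfold slack. rewrite Ropp_involutive. exact Hc.
    + unfold slack. replace (vadd (vscal (-1) v) (vscal (- t) a))
        with (vscal (-1) (vadd v (vscal t a))) by vec_ring. exact Hc.
Qed.

Lemma level_add v w : inRN N v -> inRN N w -> level (vadd v w) = level v + level w.
Proof.
  intros Hv Hw. pose proof (level_superadditive v w Hv Hw).
  pose proof (level_superadditive _ _ (inRN_scal N (-1) v Hv) (inRN_scal N (-1) w Hw)).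
  replace (vadd (vscal (-1) v) (vscal (-1) w)) with (vscal (-1) (vadd v w)) in H0 by vec_ring.
  rewrite !level_opp in H0 by (try apply inRN_add; auto). lra.
Qed.

Lemma level_scal_pos c v : c > 0 -> inRN N v -> level (vscal c v) = c * level v.
Proof.
  intros Hc Hv. pose proof (inRN_scal N c v Hv) as Hcv.
  assert (Hslack : forall t, slack (vscal c v) t <-> slack v (t / c)).
  { intros t. unfold slack. rewrite <- (C_scal_iff c (vadd v _)) by auto.
    replace (vscal c (vadd v (vscal (- (t / c)) a))) with (vadd (vscal c v) (vscal (- t) a));
      [reflexivity|].
    apply functional_extensionality; intro i. unfold vadd, vscal. field. lra. }
  apply Rle_antisym.
  - apply level_le; auto. intros t Ht. apply Hslack, slack_le_level in Ht; auto.
    apply (Rmult_le_compat_l c) in Ht; [|lra]. replace (c * (t / c)) with t in Ht; auto.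
    field. lra.
  - apply le_of_forall_lt. intros t Ht. apply slack_le_level; auto. apply Hslack.
    apply slack_lt_level; auto. apply (Rmult_lt_reg_l c); [lra|].
    replace (c * (t / c)) with t by (field; lra). exact Ht.
Qed.

Lemma level_scal c v : inRN N v -> level (vscal c v) = c * level v.
Proof.
  intros Hv. destruct (Rtotal_order c 0) as [Hc|[->|Hc]].
  - replace (vscal c v) with (vscal (-1) (vscal (- c) v)) by vec_ring.
    rewrite level_opp, level_scal_pos by (try apply inRN_scal; auto; lra). ring.
  - pose proof (level_add (vscal 0 v) (vscal 0 v) (inRN_scal N 0 v Hv) (inRN_scal N 0 v Hv)).
    replace (vadd (vscal 0 v) (vscal 0 v)) with (vscal 0 v) in H by vec_ring. lra.
  - apply level_scal_pos; auto.
Qed.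

Lemma level_a : level a = 1.
Proof.
  apply Rle_antisym.
  - apply level_le; auto. intros t Ht. apply Rnot_lt_le. intro L.
    apply (not_C_neg_multiple (t - 1)); [lra|].
    unfold slack in Ht. replace (vscal (- (t - 1)) a) with (vadd a (vscal (- t) a)) by vec_ring.
    exact Ht.
  - apply slack_le_level; auto. unfold slack.
    replace (vadd a (vscal (- (1)) a)) with (fun _ : nat => 0) by vec_ring.
    destruct (C_total (fun _ => 0)) as [H|H]; [intros ? ?; reflexivity | exact H |].
    replace (vscal (-1) (fun _ : nat => 0)) with (fun _ : nat => 0) in H by vec_ring. exact H.
Qed.

Lemma cone_contains_halfspace :
  exists e, inRN N e /\ dot N a e = 1 /\ forall v, inRN N v -> dot N v e >= 0 -> C v.
Proof.
  set (e := fun i => if Nat.ltb i N then level (basis i) else 0).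
  assert (Hlin : forall v, inRN N v -> level v = dot N v e).
  { apply linear_functional_dot; [apply level_add | apply level_scal]. }
  exists e. split; [|split].
  - intros i Hi. unfold e. destruct (Nat.ltb_spec i N); [lia | reflexivity].
  - rewrite <- Hlin, level_a; auto.
  - intros v Hv Hve. rewrite <- Hlin in Hve by auto. apply C_closed; auto.
    intros s Hs. assert (Hsl : slack v (- s)) by (apply slack_lt_level; auto; lra).
    unfold slack in Hsl. rewrite Ropp_involutive in Hsl. exact Hsl.
Qed.

End HalfSpace.

(** * Moments on circles *)

Lemma ex_RInt_cont (f : R -> R) a b : (forall x, continuity_pt f x) -> ex_RInt f a b.
Proof.
  intros H. apply (@ex_RInt_continuous R_CompleteNormedModule).
  intros. apply continuity_pt_filterlim, H.
Qed.

(* Specializations to [R -> R] that spare Coquelicot's search for the codomain space. *)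
Lemma RInt_scal_R (f : R -> R) a b c : ex_RInt f a b ->
  RInt (fun y => c * f y) a b = c * RInt f a b.
Proof. exact (RInt_scal f a b c). Qed.

Lemma ex_RInt_scal_R (f : R -> R) a b c : ex_RInt f a b -> ex_RInt (fun y => c * f y) a b.
Proof. exact (ex_RInt_scal f a b c). Qed.

Lemma RInt_plus_R (f g : R -> R) a b : ex_RInt f a b -> ex_RInt g a b ->
  RInt (fun y => f y + g y) a b = RInt f a b + RInt g a b.
Proof. exact (RInt_plus f g a b). Qed.

Lemma continuity_pt_affine (f : R -> R) al be : (forall x, continuity_pt f x) ->
  forall x, continuity_pt (fun y => f (al * y + be)) x.
Proof.
  intros H x. apply continuity_pt_comp with (f1 := fun y => al * y + be); [|apply H].
  apply continuity_pt_of_ex_derive. auto_derive. auto.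
Qed.

Section PeriodicIntegral.
Variables (f : R -> R) (T : R).
Hypotheses (Hf : forall x, continuity_pt f x) (Hper : forall x, f (x + T) = f x).

Lemma RInt_periodic t : RInt f t (t + T) = RInt f 0 T.
Proof.
  rewrite <- (RInt_Chasles f t 0 (t + T)), <- (RInt_Chasles f 0 T (t + T))
    by (apply ex_RInt_cont; auto).
  assert (E : RInt f T (t + T) = RInt f 0 t).
  { pose proof (RInt_comp_lin (V := R_CompleteNormedModule) f 1 T 0 t (ex_RInt_cont _ _ _ Hf))
      as H1.
    replace (1 * 0 + T) with T in H1 by ring. replace (1 * t + T) with (t + T) in H1 by ring.
    rewrite <- H1. apply RInt_ext. intros x _.
    change (1 * f (1 * x + T) = f x). rewrite !Rmult_1_l. apply Hper. }
  rewrite E, <- (opp_RInt_swap f 0 t) by (apply ex_RInt_cont; auto).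
  change (- RInt f 0 t + (RInt f 0 T + RInt f 0 t) = RInt f 0 T). ring.
Qed.

Lemma RInt_periodic_reflect b : RInt (fun y => f (b - y)) 0 T = RInt f 0 T.
Proof.
  rewrite <- (RInt_periodic (b - T)).
  pose proof (RInt_comp_lin (V := R_CompleteNormedModule) f (-1) b 0 T (ex_RInt_cont _ _ _ Hf))
    as H1.
  change (RInt (fun y => -1 * f (-1 * y + b)) 0 T = RInt f (-1 * 0 + b) (-1 * T + b)) in H1.
  rewrite (RInt_scal_R (fun y => f (-1 * y + b)))
    in H1 by (apply ex_RInt_cont, continuity_pt_affine; auto).
  replace (-1 * 0 + b) with b in H1 by ring. replace (-1 * T + b) with (b - T) in H1 by ring.
  rewrite <- (opp_RInt_swap f (b - T) b) in H1 by (apply ex_RInt_cont; auto).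
  replace (b - T + T) with b by ring.
  change (-1 * RInt (fun y => f (-1 * y + b)) 0 T = - RInt f (b - T) b) in H1.
  rewrite (RInt_ext _ (fun y => f (-1 * y + b))) by (intros; f_equal; ring). lra.
Qed.

(* A periodic integrand can be integrated over a window centred at [t0]. *)
Lemma RInt_periodic_pos t0 : 0 < T -> (forall x, 0 <= f x) -> 0 < f t0 -> 0 < RInt f 0 T.
Proof.
  intros HT Hnn Ht0. rewrite <- (RInt_periodic (t0 - T / 2)).
  destruct (proj1 (continuity_pt_locally f t0) (Hf t0) (mkposreal _ Ht0)) as [d Hd].
  pose proof (cond_pos d).
  set (d' := Rmin (d / 2) (T / 4)).
  assert (0 < d' /\ d' <= d / 2 /\ d' <= T / 4) as [D0 [D1 D2]].
  { unfold d'. repeat split; [apply Rmin_pos; lra | apply Rmin_l | apply Rmin_r]. }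
  assert (Hex : forall a b, ex_RInt f a b) by (intros; apply ex_RInt_cont; auto).
  rewrite <- (RInt_Chasles f _ (t0 - d') _), <- (RInt_Chasles f (t0 - d') (t0 + d')) by auto.
  assert (0 <= RInt f (t0 - T / 2) (t0 - d')) by (apply RInt_ge_0; auto; lra).
  assert (0 <= RInt f (t0 + d') (t0 - T / 2 + T)) by (apply RInt_ge_0; auto; lra).
  assert (0 < RInt f (t0 - d') (t0 + d')).
  { apply RInt_gt_0; [lra| |intros; apply continuity_pt_filterlim, Hf].
    intros x Hx. specialize (Hd x). simpl in Hd.
    assert (Hb : Rabs (x - t0) < d) by (apply Rabs_def1; lra).
    specialize (Hd Hb). apply Rabs_def2 in Hd. lra. }
  change (0 < RInt f (t0 - T / 2) (t0 - d')
    + (RInt f (t0 - d') (t0 + d') + RInt f (t0 + d') (t0 - T / 2 + T))). lra.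
Qed.

End PeriodicIntegral.

Lemma polar x y : x ^ 2 + y ^ 2 = 1 -> exists b, cos b = x /\ sin b = y.
Proof.
  intros H. assert (Hx : -1 <= x <= 1) by (split; nra).
  assert (Hs : sqrt (1 - x²) = Rabs y).
  { replace (1 - x²) with (y²) by (unfold Rsqr; lra). apply sqrt_Rsqr_abs. }
  destruct (Rle_lt_dec 0 y).
  - exists (acos x). rewrite cos_acos, sin_acos, Hs, Rabs_right by (auto; lra). auto.
  - exists (- acos x). rewrite cos_neg, sin_neg, cos_acos, sin_acos, Hs, Rabs_left by (auto; lra).
    split; [reflexivity | ring].
Qed.

Record orthonormal_pair N (e1 e2 : vec) : Prop := {
  on_in1 : inRN N e1; on_in2 : inRN N e2;
  on_norm1 : dot N e1 e1 = 1; on_norm2 : dot N e2 e2 = 1; on_orth : dot N e1 e2 = 0 }.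

Lemma dot_pair N e1 e2 a1 a2 b1 b2 : orthonormal_pair N e1 e2 ->
  dot N (vadd (vscal a1 e1) (vscal a2 e2)) (vadd (vscal b1 e1) (vscal b2 e2)) = a1 * b1 + a2 * b2.
Proof.
  intros [_ _ H1 H2 H12].
  rewrite dot_add_l, !dot_add_r, !dot_scal_l, !dot_scal_r, (dot_comm N e2 e1), H1, H2, H12. ring.
Qed.

Definition circle (p e1 e2 : vec) (r th : R) : vec :=
  fun i => p i + r * cos th * e1 i + r * sin th * e2 i.

Record circle_frame N (p e1 e2 : vec) (r : R) : Prop := {
  cf_pair : orthonormal_pair N e1 e2; cf_center : inRN N p;
  cf_perp1 : dot N p e1 = 0; cf_perp2 : dot N p e2 = 0;
  cf_radius : dot N p p + r ^ 2 = 1; cf_pos : 0 < r }.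

Definition harmonic (q1 q2 th : R) : R := q1 * cos th + q2 * sin th.

Lemma circle_eq p e1 e2 r th :
  circle p e1 e2 r th = vadd p (vadd (vscal (r * cos th) e1) (vscal (r * sin th) e2)).
Proof. apply functional_extensionality; intro; unfold circle, vadd, vscal; ring. Qed.

Lemma circle_periodic p e1 e2 r th : circle p e1 e2 r (th + 2 * PI) = circle p e1 e2 r th.
Proof. unfold circle. rewrite cos_plus, sin_plus, cos_2PI, sin_2PI. vec_ring. Qed.

Lemma harmonic_periodic q1 q2 th : harmonic q1 q2 (th + 2 * PI) = harmonic q1 q2 th.
Proof. unfold harmonic. rewrite cos_plus, sin_plus, cos_2PI, sin_2PI. ring. Qed.

Lemma continuity_pt_harmonic q1 q2 th : continuity_pt (harmonic q1 q2) th.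
Proof. apply continuity_pt_of_ex_derive. unfold harmonic. auto_derive. auto. Qed.

Section Circle.
Variables (N : nat) (p e1 e2 : vec) (r : R).
Hypothesis F : circle_frame N p e1 e2 r.

Lemma inRN_circle th : inRN N (circle p e1 e2 r th).
Proof.
  destruct F as [[] ? ? ? ? ?]. rewrite circle_eq.
  apply inRN_add; [|apply inRN_add]; try apply inRN_scal; auto.
Qed.

Lemma sphere_circle th : sphere N (circle p e1 e2 r th).
Proof.
  split; [apply inRN_circle|]. pose proof (sin2_cos2 th). unfold Rsqr in H.
  destruct F as [[? ? H1 H2 H12] ? Hp1 Hp2 Hpp ?]. rewrite circle_eq.
  rewrite !dot_add_l, !dot_add_r, !dot_scal_l, !dot_scal_r, (dot_comm N e1 p), (dot_comm N e2 p),
    (dot_comm N e2 e1), Hp1, Hp2, H1, H2, H12. nra.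
Qed.

Lemma dot_pair_circle q1 q2 th :
  dot N (vadd (vscal q1 e1) (vscal q2 e2)) (circle p e1 e2 r th) = r * harmonic q1 q2 th.
Proof.
  destruct F as [Hpair ? Hp1 Hp2 ? ?]. unfold harmonic.
  rewrite circle_eq, dot_add_r, dot_pair by auto.
  rewrite dot_add_l, !dot_scal_l, (dot_comm N e1 p), (dot_comm N e2 p), Hp1, Hp2. ring.
Qed.

(* The reflection across (q1, q2)^perp acts on the circle as th |-> b - th, where b is twice
   the polar angle of (q2, -q1). *)
Lemma reflect_circle q1 q2 : 0 < q1 ^ 2 + q2 ^ 2 -> exists b, forall th,
  reflect N (vadd (vscal q1 e1) (vscal q2 e2)) (circle p e1 e2 r th) = circle p e1 e2 r (b - th)
  /\ harmonic q1 q2 (b - th) = - harmonic q1 q2 th.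
Proof.
  intros Hq.
  destruct (polar ((q2 ^ 2 - q1 ^ 2) / (q1 ^ 2 + q2 ^ 2)) (- 2 * q1 * q2 / (q1 ^ 2 + q2 ^ 2)))
    as [b [Hcos Hsin]]; [field_simplify_eq; lra|].
  exists b. intros th. unfold harmonic. rewrite cos_minus, sin_minus, Hcos, Hsin.
  split; [|field; lra].
  pose proof (cf_pair _ _ _ _ _ F) as Hpair.
  assert (Hd : inRN N (vadd (vscal q1 e1) (vscal q2 e2)))
    by (apply inRN_add; apply inRN_scal; apply Hpair).
  rewrite reflect_eq, dot_pair_circle, dot_pair by (auto; apply inRN_circle).
  unfold harmonic. apply functional_extensionality; intro i.
  unfold vsub, vscal, vadd, circle. rewrite cos_minus, sin_minus, Hcos, Hsin.
  field. lra.
Qed.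

Variable u : vec -> R.
Hypothesis Hc : cont_on_sphere N u.

Lemma continuity_pt_on_circle th : continuity_pt (fun t => u (circle p e1 e2 r t)) th.
Proof.
  apply continuity_pt_locally. intros eps.
  generalize (cont_on_sphere_curve N u Hc (circle p e1 e2 r) th (sphere_circle th)
    ltac:(intros; unfold circle; apply continuity_pt_of_ex_derive; auto_derive; auto)
    eps (cond_pos eps)).
  apply filter_imp. intros t Ht. apply Ht, sphere_circle.
Qed.

Definition circle_moment (q1 q2 : R) : R :=
  RInt (fun th => u (circle p e1 e2 r th) * harmonic q1 q2 th) 0 (2 * PI).

Lemma continuity_pt_moment_integrand q1 q2 th :
  continuity_pt (fun t => u (circle p e1 e2 r t) * harmonic q1 q2 t) th.
Proof.
  apply (continuity_pt_mult (fun t => u (circle p e1 e2 r t)));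
    [apply continuity_pt_on_circle | apply continuity_pt_harmonic].
Qed.

Lemma circle_moment_linear q1 q2 :
  circle_moment q1 q2 = q1 * circle_moment 1 0 + q2 * circle_moment 0 1.
Proof.
  set (g := fun t => u (circle p e1 e2 r t)).
  assert (Hex : forall a b, ex_RInt (fun t => g t * harmonic a b t) 0 (2 * PI))
    by (intros; apply ex_RInt_cont, continuity_pt_moment_integrand).
  unfold circle_moment. fold g.
  rewrite <- !RInt_scal_R, <- RInt_plus_R by (auto; apply ex_RInt_scal_R; auto).
  apply RInt_ext. intros t _. unfold harmonic.
  match goal with |- ?x = ?y => change (@eq R x y) end. ring.
Qed.

Lemma circle_moment_symmetrized q1 q2 b :
  (forall th, harmonic q1 q2 (b - th) = - harmonic q1 q2 th) ->
  2 * circle_moment q1 q2 = RInt (fun th =>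
    (u (circle p e1 e2 r th) - u (circle p e1 e2 r (b - th))) * harmonic q1 q2 th) 0 (2 * PI).
Proof.
  intros Hb. set (f := fun t => u (circle p e1 e2 r t) * harmonic q1 q2 t).
  assert (Hf : forall t, continuity_pt f t) by apply continuity_pt_moment_integrand.
  assert (Hfb : forall t, continuity_pt (fun y => f (b - y)) t).
  { intros. apply (continuity_pt_ext (fun y => f (-1 * y + b))); [intros; f_equal; ring|].
    apply continuity_pt_affine, Hf. }
  assert (Hper : forall t, f (t + 2 * PI) = f t).
  { intros. unfold f. rewrite circle_periodic, harmonic_periodic. reflexivity. }
  rewrite (RInt_ext _ (fun t => f t + f (b - t))).
  - rewrite RInt_plus_R, RInt_periodic_reflect by (auto; apply ex_RInt_cont; auto).
    unfold circle_moment. fold f. ring.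
  - intros t _. unfold f. rewrite Hb.
    match goal with |- ?x = ?y => change (@eq R x y) end. ring.
Qed.

Lemma symmetrized_integrand_nonneg q1 q2 b th :
  dominant N u (vadd (vscal q1 e1) (vscal q2 e2)) ->
  (forall t, reflect N (vadd (vscal q1 e1) (vscal q2 e2)) (circle p e1 e2 r t)
     = circle p e1 e2 r (b - t) /\ harmonic q1 q2 (b - t) = - harmonic q1 q2 t) ->
  0 <= (u (circle p e1 e2 r th) - u (circle p e1 e2 r (b - th))) * harmonic q1 q2 th.
Proof.
  intros Hdom Hb. pose proof (cf_pos _ _ _ _ _ F).
  assert (Hside : forall t, 0 < harmonic q1 q2 t ->
    u (circle p e1 e2 r t) >= u (circle p e1 e2 r (b - t))).
  { intros t Ht. rewrite <- (proj1 (Hb t)). apply Hdom; [apply sphere_circle|].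
    rewrite dot_pair_circle. nra. }
  destruct (Rtotal_order (harmonic q1 q2 th) 0) as [Hn|[Hz|Hp]].
  - pose proof (Hside (b - th)) as Hs. rewrite (proj2 (Hb th)) in Hs.
    replace (b - (b - th)) with th in Hs by ring. specialize (Hs ltac:(lra)). nra.
  - rewrite Hz. lra.
  - pose proof (Hside th Hp). nra.
Qed.

Lemma symmetrized_integrand_cont_periodic q1 q2 b
  (H := fun th => (u (circle p e1 e2 r th) - u (circle p e1 e2 r (b - th))) * harmonic q1 q2 th) :
  (forall th, continuity_pt H th) /\ (forall th, H (th + 2 * PI) = H th).
Proof.
  split.
  - intros th.
    apply (continuity_pt_mult (fun t => u (circle p e1 e2 r t) - u (circle p e1 e2 r (b - t))));
      [|apply continuity_pt_harmonic].
    apply (continuity_pt_minus (fun t => u (circle p e1 e2 r t))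
      (fun t => u (circle p e1 e2 r (b - t)))); [apply continuity_pt_on_circle|].
    apply (continuity_pt_ext (fun y => u (circle p e1 e2 r (-1 * y + b))));
      [intros y; replace (-1 * y + b) with (b - y) by ring; reflexivity|].
    apply (continuity_pt_affine (fun t => u (circle p e1 e2 r t))), continuity_pt_on_circle.
  - intros th. unfold H. rewrite circle_periodic, harmonic_periodic.
    rewrite <- (circle_periodic p e1 e2 r (b - (th + 2 * PI))).
    replace (b - (th + 2 * PI) + 2 * PI) with (b - th) by ring. reflexivity.
Qed.

Lemma circle_moment_nonneg q1 q2 : 0 < q1 ^ 2 + q2 ^ 2 ->
  dominant N u (vadd (vscal q1 e1) (vscal q2 e2)) -> 0 <= circle_moment q1 q2.
Proof.
  intros Hq Hdom. destruct (reflect_circle q1 q2 Hq) as [b Hb].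
  destruct (symmetrized_integrand_cont_periodic q1 q2 b) as [Hcont _].
  assert (0 <= 2 * circle_moment q1 q2); [|lra].
  rewrite (circle_moment_symmetrized q1 q2 b) by apply Hb.
  apply RInt_ge_0; [pose proof PI_RGT_0; lra | apply ex_RInt_cont, Hcont |].
  intros th _. apply symmetrized_integrand_nonneg; auto.
Qed.

Lemma circle_moment_pos q1 q2 th0 : 0 < q1 ^ 2 + q2 ^ 2 ->
  dominant N u (vadd (vscal q1 e1) (vscal q2 e2)) -> harmonic q1 q2 th0 < 0 ->
  u (circle p e1 e2 r th0)
    < u (reflect N (vadd (vscal q1 e1) (vscal q2 e2)) (circle p e1 e2 r th0)) ->
  0 < circle_moment q1 q2.
Proof.
  intros Hq Hdom Hneg Hlt. destruct (reflect_circle q1 q2 Hq) as [b Hb].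
  destruct (symmetrized_integrand_cont_periodic q1 q2 b) as [Hcont Hper].
  assert (0 < 2 * circle_moment q1 q2); [|lra].
  rewrite (circle_moment_symmetrized q1 q2 b) by apply Hb.
  apply (RInt_periodic_pos _ _ Hcont Hper th0); [pose proof PI_RGT_0; lra | |].
  - intros th. apply symmetrized_integrand_nonneg; auto.
  - rewrite (proj1 (Hb th0)) in Hlt. nra.
Qed.

End Circle.

(** * Dominant directions form a convex cone *)

Lemma unit_decomposition N v : inRN N v -> v <> (fun _ => 0) ->
  exists n e, 0 < n /\ inRN N e /\ dot N e e = 1 /\ v = vscal n e.
Proof.
  intros Hv Hne. pose proof (dot_self_pos N v Hv Hne) as Hvv.
  pose proof (sqrt_lt_R0 _ Hvv). pose proof (sqrt_sqrt _ (Rlt_le _ _ Hvv)).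
  exists (sqrt (dot N v v)), (vscal (/ sqrt (dot N v v)) v).
  split; [auto | split; [apply inRN_scal; auto | split]].
  - rewrite dot_scal_l, dot_scal_r. rewrite <- H0 at 3. field. lra.
  - apply functional_extensionality; intro i. unfold vscal. field. lra.
Qed.

Lemma gram_schmidt N a b : inRN N a -> inRN N b -> a <> (fun _ => 0) ->
  (forall c, b <> vscal c a) ->
  exists e1 e2 al be ga, orthonormal_pair N e1 e2 /\ 0 < al /\ 0 < ga /\
    a = vscal al e1 /\ b = vadd (vscal be e1) (vscal ga e2).
Proof.
  intros Ha Hb Ha0 Hind.
  destruct (unit_decomposition N a Ha Ha0) as [al [e1 [Hal [He1 [H11 ->]]]]].
  set (b' := vsub b (vscal (dot N b e1) e1)).
  assert (Hb' : inRN N b') by (apply inRN_sub, inRN_scal; auto).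
  destruct (classic (b' = (fun _ => 0))) as [Z|Z].
  { exfalso. apply (Hind (dot N b e1 / al)). apply functional_extensionality; intro i.
    apply (f_equal (fun v => v i)) in Z. unfold b', vsub, vscal in *. field_simplify; lra. }
  destruct (unit_decomposition N b' Hb' Z) as [ga [e2 [Hga [He2 [H22 Hb'e]]]]].
  assert (H12 : dot N e1 e2 = 0).
  { apply (Rmult_eq_reg_l ga); [|lra]. rewrite <- dot_scal_r, <- Hb'e.
    unfold b'. rewrite dot_sub_r, dot_scal_r, H11, dot_comm. ring. }
  exists e1, e2, al, (dot N b e1), ga. repeat split; auto.
  rewrite <- Hb'e. unfold b'. vec_ring.
Qed.

Lemma circle_through N e1 e2 z : orthonormal_pair N e1 e2 -> sphere N z ->
  0 < dot N z e1 ^ 2 + dot N z e2 ^ 2 ->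
  exists p r th0, circle_frame N p e1 e2 r /\ circle p e1 e2 r th0 = z.
Proof.
  intros Hpair [Hz Hzz] Hpos. destruct Hpair as [He1 He2 H11 H22 H12].
  set (z1 := dot N z e1). set (z2 := dot N z e2). fold z1 z2 in Hpos.
  set (p := vsub z (vadd (vscal z1 e1) (vscal z2 e2))).
  set (r := sqrt (z1 ^ 2 + z2 ^ 2)).
  assert (Hr : 0 < r) by (apply sqrt_lt_R0; auto).
  assert (Hrr : r ^ 2 = z1 ^ 2 + z2 ^ 2) by (unfold r; rewrite <- Rsqr_pow2; apply Rsqr_sqrt; lra).
  destruct (polar (z1 / r) (z2 / r)) as [th0 [Hcos Hsin]].
  { field_simplify_eq; lra. }
  exists p, r, th0. split.
  - split; [split; auto | | | | |]; auto.
    + apply inRN_sub, inRN_add; try apply inRN_scal; auto.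
    + unfold p. rewrite dot_sub_l, dot_add_l, !dot_scal_l, (dot_comm N e2 e1), H11, H12.
      unfold z1. ring.
    + unfold p. rewrite dot_sub_l, dot_add_l, !dot_scal_l, H22, H12. unfold z2. ring.
    + unfold p. rewrite !dot_sub_l, !dot_sub_r, !dot_add_l, !dot_add_r, !dot_scal_l, !dot_scal_r.
      rewrite (dot_comm N e2 e1), (dot_comm N e1 z), (dot_comm N e2 z), H11, H22, H12, Hzz, Hrr.
      fold z1 z2. ring.
  - rewrite circle_eq, Hcos, Hsin. unfold p.
    apply functional_extensionality; intro; unfold vadd, vscal, vsub. field. lra.
Qed.

Lemma sum_squares_pos x y : x <> 0 \/ y <> 0 -> 0 < x ^ 2 + y ^ 2.
Proof.
  intros [H|H]; [pose proof (pow2_ge_0 y); pose proof (pow2_gt_0 x H)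
                | pose proof (pow2_ge_0 x); pose proof (pow2_gt_0 y H)]; lra.
Qed.

Lemma dominant_add_collinear N u a c :
  dominant N u a -> dominant N u (vscal c a) -> dominant N u (vadd a (vscal c a)).
Proof.
  intros Ha Hca. destruct (Rtotal_order (1 + c) 0) as [Hn|[Hz|Hp]].
  - replace (vadd a (vscal c a)) with (vscal ((1 + c) / c) (vscal c a)).
    + apply dominant_scal; auto. apply Rdiv_neg_neg; lra.
    + apply functional_extensionality; intro; unfold vadd, vscal. field. lra.
  - replace (vadd a (vscal c a)) with (fun _ : nat => 0); [apply dominant_zero|].
    apply functional_extensionality; intro; unfold vadd, vscal. replace c with (-1) by lra. ring.
  - replace (vadd a (vscal c a)) with (vscal (1 + c) a) by vec_ring. apply dominant_scal; auto.
Qed.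

(* If a + b were not dominant, a circle through a witness point in the plane of a and b
   would carry moments of a, b and -(a + b) that are nonnegative, nonnegative and positive,
   although the moment is linear. *)
Lemma dominant_add_planar N u e1 e2 al be ga : cont_on_sphere N u -> separable N u ->
  orthonormal_pair N e1 e2 -> 0 < al -> 0 < ga ->
  dominant N u (vscal al e1) -> dominant N u (vadd (vscal be e1) (vscal ga e2)) ->
  dominant N u (vadd (vscal (al + be) e1) (vscal ga e2)).
Proof.
  intros Hc Hsep Hpair Hal Hga Hda Hdb. apply NNPP. intro Hnd.
  destruct (not_dominant_witness N u _ Hnd) as [z [Sz [Hz Huz]]].
  destruct (dominant_or_opp N u (vadd (vscal (al + be) e1) (vscal ga e2)) Hsep) as [Hd|Hd];
    [apply inRN_add; apply inRN_scal; apply Hpair | contradiction |].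
  replace (vscal (-1) (vadd (vscal (al + be) e1) (vscal ga e2)))
    with (vadd (vscal (- (al + be)) e1) (vscal (- ga) e2)) in Hd by vec_ring.
  replace (vscal al e1) with (vadd (vscal al e1) (vscal 0 e2)) in Hda by vec_ring.
  destruct (circle_through N e1 e2 z Hpair Sz) as [p [r [th0 [Hf <-]]]].
  { rewrite dot_add_l, !dot_scal_l, (dot_comm N e1), (dot_comm N e2) in Hz.
    apply Rnot_le_lt. intro Hle.
    assert (dot N z e1 = 0 /\ dot N z e2 = 0) as [Z1 Z2] by nra.
    rewrite Z1, Z2 in Hz. lra. }
  pose proof (cf_pos _ _ _ _ _ Hf). rewrite dot_pair_circle in Hz by auto.
  pose proof (circle_moment_nonneg N p e1 e2 r Hf u Hc al 0
    ltac:(apply sum_squares_pos; lra) Hda).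
  pose proof (circle_moment_nonneg N p e1 e2 r Hf u Hc be ga
    ltac:(apply sum_squares_pos; lra) Hdb).
  pose proof (circle_moment_pos N p e1 e2 r Hf u Hc (- (al + be)) (- ga) th0
    ltac:(apply sum_squares_pos; lra) Hd) as Hpos.
  assert (Hneg : harmonic (- (al + be)) (- ga) th0 < 0) by (unfold harmonic in *; nra).
  assert (Hrefl : reflect N (vadd (vscal (- (al + be)) e1) (vscal (- ga) e2)) (circle p e1 e2 r th0)
    = reflect N (vadd (vscal (al + be) e1) (vscal ga e2)) (circle p e1 e2 r th0)).
  { replace (vadd (vscal (- (al + be)) e1) (vscal (- ga) e2))
      with (vscal (-1) (vadd (vscal (al + be) e1) (vscal ga e2))) by vec_ring.
    apply reflect_scal. lra. }
  rewrite Hrefl in Hpos. specialize (Hpos Hneg Huz).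
  rewrite (circle_moment_linear N p e1 e2 r Hf u Hc al) in H0.
  rewrite (circle_moment_linear N p e1 e2 r Hf u Hc be) in H1.
  rewrite (circle_moment_linear N p e1 e2 r Hf u Hc (- _)) in Hpos.
  nra.
Qed.

Lemma dominant_add N u a b : cont_on_sphere N u -> separable N u -> inRN N a -> inRN N b ->
  dominant N u a -> dominant N u b -> dominant N u (vadd a b).
Proof.
  intros Hc Hsep Ha Hb Hda Hdb.
  destruct (classic (a = (fun _ => 0))) as [->|Ha0].
  { replace (vadd (fun _ => 0) b) with b by vec_ring. exact Hdb. }
  destruct (classic (exists c, b = vscal c a)) as [[c ->]|Hind].
  { exact (dominant_add_collinear N u a c Hda Hdb). }
  destruct (gram_schmidt N a b Ha Hb Ha0 ltac:(intros c E; apply Hind; exists c; exact E))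
    as [e1 [e2 [al [be [ga [Hpair [Hal [Hga [-> ->]]]]]]]]].
  replace (vadd (vscal al e1) (vadd (vscal be e1) (vscal ga e2)))
    with (vadd (vscal (al + be) e1) (vscal ga e2)) by vec_ring.
  apply dominant_add_planar; auto.
Qed.

(** * Functions monotone in the last coordinate *)

Lemma lub_approx (E : R -> Prop) m eps : is_lub E m -> eps > 0 -> exists t, E t /\ t > m - eps.
Proof.
  intros [Hub Hl] He. apply NNPP. intro C.
  assert (is_upper_bound E (m - eps)); [|specialize (Hl _ H); lra].
  intros t Et. apply Rnot_lt_le. intro L. apply C. exists t; auto.
Qed.

(* al is the infimum of {t : c <= G t}, attained by continuity. *)
Lemma nondecreasing_superlevel (G : R -> R) a b c : a <= b ->
  (forall t, continuity_pt G t) ->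
  (forall s t, a <= s -> s <= t -> t <= b -> G s <= G t) -> c <= G b ->
  exists al, a <= al <= b /\ forall t, a <= t <= b -> (c <= G t <-> al <= t).
Proof.
  intros Hab Hcont Hmono Hb.
  set (S := fun s => a <= - s <= b /\ c <= G (- s)).
  destruct (completeness S) as [m Hm].
  { exists (- a). intros s [Hs _]. lra. }
  { exists (- b). split; [lra | rewrite Ropp_involutive; auto]. }
  assert (Hlow : forall t, a <= t <= b -> c <= G t -> - m <= t).
  { intros t Ht Hc. assert (- t <= m); [|lra]. apply Hm. split; rewrite Ropp_involutive; auto. }
  assert (Hbnd : a <= - m <= b).
  { split; [|apply Hlow; auto; lra].
    assert (m <= - a); [|lra]. apply Hm. intros s [Hs _]. lra. }
  assert (Hreach : c <= G (- m)).
  { apply Rnot_lt_le. intro L.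
    destruct (proj1 (continuity_pt_locally G (- m)) (Hcont (- m))
      (mkposreal _ (proj2 (Rlt_0_minus _ _) L))) as [d Hd].
    destruct (lub_approx S m d Hm (cond_pos d)) as [s [[Hs Hcs] Hsm]].
    assert (- m <= - s) by (apply Hlow; auto).
    specialize (Hd (- s)). simpl in Hd.
    assert (Hball : Rabs (- s - - m) < d) by (apply Rabs_def1; lra).
    specialize (Hd Hball). apply Rabs_def2 in Hd. lra. }
  exists (- m). split; auto. intros t Ht. split; [apply Hlow; auto|].
  intros Hmt. apply (Rle_trans _ (G (- m))); auto. apply Hmono; lra.
Qed.

Lemma sin_le_iff a b : - (PI / 2) <= a <= PI / 2 -> - (PI / 2) <= b <= PI / 2 ->
  (sin a <= sin b <-> a <= b).
Proof.
  intros Ha Hb. split; intros H.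
  - destruct (Req_dec (sin a) (sin b)) as [E|E].
    + destruct (Rle_lt_dec a b) as [|L]; auto.
      pose proof (sin_increasing_1 b a ltac:(lra) ltac:(lra) ltac:(lra) ltac:(lra) L). lra.
    + apply Rlt_le, sin_increasing_0; lra.
  - destruct (Req_dec a b) as [->|]; [lra|].
    apply Rlt_le, sin_increasing_1; lra.
Qed.

Lemma circ_pt_eq N t : (2 <= N)%nat ->
  circ_pt N t = vadd (vscal (cos t) (basis (N - 2))) (vscal (sin t) (basis (N - 1))).
Proof.
  intros HN. apply functional_extensionality; intro i. unfold circ_pt, vadd, vscal, basis.
  destruct (Nat.eqb_spec i (N - 2)), (Nat.eqb_spec i (N - 1)); try lia; ring.
Qed.

Lemma sphere_circ_pt N t : (2 <= N)%nat -> sphere N (circ_pt N t).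
Proof.
  intros HN. rewrite circ_pt_eq by auto. split.
  - apply inRN_add; apply inRN_scal, inRN_basis; lia.
  - rewrite !dot_add_l, !dot_add_r, !dot_scal_l, !dot_scal_r, !dot_basis_r by lia.
    unfold basis. rewrite !Nat.eqb_refl.
    destruct (Nat.eqb_spec (N - 2) (N - 1)), (Nat.eqb_spec (N - 1) (N - 2)); try lia.
    pose proof (sin2_cos2 t). unfold Rsqr in H. lra.
Qed.

Lemma circ_pt_last N t : (2 <= N)%nat -> circ_pt N t (N - 1)%nat = sin t.
Proof.
  intros HN. unfold circ_pt. destruct (Nat.eqb_spec (N - 1) (N - 2)); [lia|].
  rewrite Nat.eqb_refl. reflexivity.
Qed.

Section Zonal.
Variables (N : nat) (U : vec -> R).
Hypotheses (HN : (2 <= N)%nat)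
  (U_mono : forall x y, sphere N x -> sphere N y -> x (N - 1)%nat <= y (N - 1)%nat -> U x <= U y)
  (U_cont : forall t, continuity_pt (fun t => U (circ_pt N t)) t)
  (U_nonconst : exists x y, sphere N x /\ sphere N y /\ U x <> U y).

Let G t := U (circ_pt N t).

Lemma U_zonal x y : sphere N x -> sphere N y -> x (N - 1)%nat = y (N - 1)%nat -> U x = U y.
Proof. intros. apply Rle_antisym; apply U_mono; auto; lra. Qed.

Lemma U_on_meridian x : sphere N x -> U x = G (asin (x (N - 1)%nat)).
Proof.
  intros Sx. apply U_zonal; auto; [apply sphere_circ_pt; auto|].
  rewrite circ_pt_last, sin_asin by (auto; apply (sphere_coord_bound N); auto; lia).
  reflexivity.
Qed.

Lemma G_mono s t : - (PI / 2) <= s -> s <= t -> t <= PI / 2 -> G s <= G t.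
Proof.
  intros. apply U_mono; try apply sphere_circ_pt; auto.
  rewrite !circ_pt_last by auto. apply sin_le_iff; lra.
Qed.

Lemma G_range y : sphere N y -> G (- (PI / 2)) <= U y <= G (PI / 2).
Proof.
  intros Sy. pose proof (sphere_coord_bound N y (N - 1) Sy ltac:(lia)).
  split; apply U_mono; try apply sphere_circ_pt; auto;
    rewrite circ_pt_last, ?sin_neg, sin_PI2 by auto; lra.
Qed.

Lemma zonal_max_set : exists h1, -1 <= h1 <= 1 /\ forall x, sphere N x ->
  ((forall y, sphere N y -> U y <= U x) <-> x (N - 1)%nat >= h1).
Proof.
  pose proof PI_RGT_0.
  destruct (nondecreasing_superlevel G (- (PI / 2)) (PI / 2) (G (PI / 2))) as [al [Hal Hiff]];
    auto; try lra; [intros; apply G_mono; lra|].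
  exists (sin al). split; [apply SIN_bound|]. intros x Sx.
  pose proof (asin_bound (x (N - 1)%nat)).
  pose proof (sphere_coord_bound N x (N - 1) Sx ltac:(lia)).
  transitivity (G (PI / 2) <= U x).
  - split; [intros Hmax; apply Hmax, sphere_circ_pt; auto|].
    intros Hx y Sy. pose proof (G_range y Sy). lra.
  - rewrite U_on_meridian, Hiff, <- sin_le_iff, sin_asin by (auto; lra). lra.
Qed.

Lemma zonal_min_set : exists h2, -1 <= h2 <= 1 /\ forall x, sphere N x ->
  ((forall y, sphere N y -> U x <= U y) <-> x (N - 1)%nat <= h2).
Proof.
  pose proof PI_RGT_0.
  destruct (nondecreasing_superlevel (fun t => - G (- t)) (- (PI / 2)) (PI / 2)
    (- G (- (PI / 2)))) as [al [Hal Hiff]]; try lra.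
  - intros t. apply continuity_pt_opp.
    apply (continuity_pt_ext (fun t => G (-1 * t + 0))); [intros; f_equal; ring|].
    apply (continuity_pt_affine G), U_cont.
  - intros. apply Ropp_le_contravar, G_mono; lra.
  - exists (sin (- al)). split; [apply SIN_bound|]. intros x Sx.
    pose proof (asin_bound (x (N - 1)%nat)).
    pose proof (sphere_coord_bound N x (N - 1) Sx ltac:(lia)).
    transitivity (U x <= G (- (PI / 2))).
    + split; [intros Hmin; apply Hmin, sphere_circ_pt; auto|].
      intros Hx y Sy. pose proof (G_range y Sy). lra.
    + rewrite U_on_meridian by auto.
      rewrite <- (sin_asin (x (N - 1)%nat)) at 2 by lra.
      rewrite sin_le_iff by lra.
      pose proof (Hiff (- asin (x (N - 1)%nat)) ltac:(lra)) as Hi.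
      rewrite Ropp_involutive in Hi. lra.
Qed.

Lemma zonal_level_sets : exists h1 h2 : R,
    -1 <= h1 <= 1 /\ -1 <= h2 <= 1 /\
    h1 > h2 /\
    (forall x, sphere N x ->
       ((forall y, sphere N y -> U y <= U x) <-> x (N - 1)%nat >= h1)) /\
    (forall x, sphere N x ->
       ((forall y, sphere N y -> U x <= U y) <-> x (N - 1)%nat <= h2)) /\
    (forall h, -1 <= h <= 1 -> forall x y, sphere N x -> sphere N y ->
       x (N - 1)%nat = h -> y (N - 1)%nat = h -> U x = U y) /\
    (forall a b, PI / 2 <= a -> a <= b -> b <= 3 * PI / 2 ->
       U (circ_pt N b) <= U (circ_pt N a)).
Proof.
  destruct zonal_max_set as [h1 [Hh1 Hmax]], zonal_min_set as [h2 [Hh2 Hmin]].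
  exists h1, h2. do 2 (split; [lra|]).
  split; [|split; [exact Hmax | split; [exact Hmin | split]]].
  - apply Rnot_le_gt. intro Hle.
    destruct U_nonconst as [x [y [Sx [Sy Hxy]]]].
    set (c := circ_pt N (asin h1)).
    assert (Sc : sphere N c) by (apply sphere_circ_pt; auto).
    assert (Hc : c (N - 1)%nat = h1) by (unfold c; rewrite circ_pt_last, sin_asin; auto).
    pose proof (proj2 (Hmax c Sc) ltac:(lra)). pose proof (proj2 (Hmin c Sc) ltac:(lra)).
    apply Hxy. apply Rle_antisym; apply (Rle_trans _ (U c)); auto.
  - intros h _ x y Sx Sy Hx Hy. apply U_zonal; congruence.
  - intros a b Ha Hab Hb. apply U_mono; try apply sphere_circ_pt; auto.
    rewrite !circ_pt_last by auto. destruct (Req_dec a b) as [->|]; [lra|].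
    apply Rlt_le, sin_decreasing_1; lra.
Qed.
End Zonal.

Lemma monotone_of_dominant_halfspace N u e :
  (forall v, inRN N v -> dot N v e >= 0 -> dominant N u v) ->
  forall x y, sphere N x -> sphere N y -> dot N x e <= dot N y e -> u x <= u y.
Proof.
  intros Hhalf x y Sx Sy Hle. destruct (classic (x = y)) as [->|Hne]; [lra|].
  assert (Hd : dominant N u (vsub y x)).
  { apply Hhalf; [apply inRN_sub; [apply Sy | apply Sx]|]. rewrite dot_sub_l. lra. }
  pose proof (Hd y Sy (dot_swap_pos N y x Sy Sx (not_eq_sym Hne))) as H.
  rewrite reflect_swap in H by auto. lra.
Qed.

Lemma separable_monotone_direction N u : cont_on_sphere N u -> separable N u ->
  (exists x y, sphere N x /\ sphere N y /\ u x <> u y) ->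
  exists e, sphere N e /\
    forall x y, sphere N x -> sphere N y -> dot N x e <= dot N y e -> u x <= u y.
Proof.
  intros Hc Hsep [x0 [y0 [Sx0 [Sy0 Hne]]]].
  assert (exists x y, sphere N x /\ sphere N y /\ u x > u y) as [x [y [Sx [Sy Hxy]]]].
  { destruct (Rtotal_order (u x0) (u y0)) as [L|[L|L]]; [exists y0, x0 | contradiction |
      exists x0, y0]; auto. }
  assert (Hne' : y <> x) by (intros ->; lra).
  set (a := vsub x y).
  assert (Ha : inRN N a) by (apply inRN_sub; [apply Sx | apply Sy]).
  assert (Hopp : ~ dominant N u (vscal (-1) a)).
  { replace (vscal (-1) a) with (vsub y x) by (unfold a; vec_ring). intros Hd.
    pose proof (Hd y Sy (dot_swap_pos N y x Sy Sx Hne')) as H.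
    rewrite reflect_swap in H by auto. lra. }
  destruct (cone_contains_halfspace N (dominant N u) a Ha
    (fun v w Hv Hw => dominant_add N u v w Hc Hsep Hv Hw) (dominant_scal N u)
    (fun v => dominant_or_opp N u v Hsep) (fun x Hx => dominant_locally N u Hc Hsep a x Ha Hx Hopp)
    Hopp (fun v Hv => dominant_closed N u Hc v a Hv Ha)) as [e [He [Hae Hhalf]]].
  assert (He0 : e <> (fun _ => 0)) by (intros ->; rewrite dot_comm, dot_zero_l in Hae; lra).
  destruct (unit_decomposition N e He He0) as [n [e' [Hn [He' [He'e' ->]]]]].
  exists e'. split; [split; auto|].
  intros x' y' Sx' Sy' Hle. apply (monotone_of_dominant_halfspace N u _ Hhalf); auto.
  rewrite !dot_scal_r. nra.
Qed.

Definition householder N (w : vec) : nat -> nat -> R :=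
  fun k i => basis i k - 2 * w k * w i / dot N w w.

Lemma householder_orthogonal N w : inRN N w -> orthogonal N (householder N w).
Proof.
  intros Hw i j Hi Hj. unfold householder. set (ww := dot N w w).
  rewrite (sumN_ext _ _ (fun k => basis i k * basis j k
     + (- (2 * w i / ww)) * (basis j k * w k) + (- (2 * w j / ww)) * (basis i k * w k)
     + (4 * w i * w j / (ww * ww)) * (w k * w k))).
  2:{ intros k Hk. destruct (Req_dec ww 0) as [E|E].
      - rewrite E. unfold Rdiv. rewrite Rmult_0_l, Rinv_0. ring.
      - field. auto. }
  rewrite !sumN_plus, !sumN_scal, !sumN_basis by auto. fold (dot N w w). fold ww.
  unfold basis. destruct (Req_dec ww 0) as [E|E].
  - rewrite (dot_self_eq0 N w Hw E), E. unfold Rdiv. rewrite Rinv_0.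
    destruct (Nat.eqb_spec i j); ring.
  - destruct (Nat.eqb_spec i j) as [->|]; field; auto.
Qed.

Lemma householder_apply N w y : mat_inv_apply N (householder N w) y = reflect N w y.
Proof.
  apply functional_extensionality; intro i. unfold mat_inv_apply, reflect, householder.
  destruct (Nat.ltb_spec i N); [|reflexivity]. set (ww := dot N w w).
  rewrite (sumN_ext _ _ (fun k => basis i k * y k + (- (2 * w i / ww)) * (w k * y k))).
  2:{ intros k Hk. destruct (Req_dec ww 0) as [E|E].
      - rewrite E. unfold Rdiv. rewrite Rinv_0. ring.
      - field. auto. }
  rewrite sumN_plus, sumN_scal, sumN_basis by auto. fold (dot N w y).
  destruct (Req_dec ww 0) as [E|E].
  - rewrite E. unfold Rdiv. rewrite Rinv_0. ring.
  - field. auto.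
Qed.

(* The Householder reflection swapping e and the last basis vector. *)
Lemma rotate_to_last_axis N e : (2 <= N)%nat -> sphere N e -> exists M,
  orthogonal N M /\
  (forall y, sphere N y ->
     sphere N (mat_inv_apply N M y) /\ dot N (mat_inv_apply N M y) e = y (N - 1)%nat) /\
  (forall x, sphere N x -> exists y, sphere N y /\ mat_inv_apply N M y = x).
Proof.
  intros HN Se. pose proof (sphere_basis N (N - 1) ltac:(lia)) as Sb.
  set (w := vsub e (basis (N - 1))).
  assert (Hw : inRN N w) by (apply inRN_sub; [apply Se | apply Sb]).
  exists (householder N w). split; [apply householder_orthogonal; auto|].
  split; [intros y Sy | intros x Sx]; rewrite ?householder_apply.
  - split; [apply sphere_reflect_any; auto|].
    destruct (classic (e = basis (N - 1))) as [E|Hne].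
    + assert (Hw0 : w = (fun _ => 0)) by (unfold w; rewrite E; vec_ring).
      rewrite reflect_degenerate, E, dot_basis_r by (try apply Sy; try lia; rewrite Hw0;
        apply dot_zero_l).
      reflexivity.
    + assert (Hww : dot N w w <> 0).
      { intro Z. apply Hne. pose proof (dot_self_eq0 N w Hw Z) as W.
        apply functional_extensionality; intro i. apply (f_equal (fun v => v i)) in W.
        unfold w, vsub in W. lra. }
      rewrite dot_reflect by (auto; try apply Sy; apply Se).
      unfold w. rewrite reflect_swap, dot_basis_r by (auto; lia). reflexivity.
  - exists (reflect N w x). rewrite householder_apply.
    split; [apply sphere_reflect_any; auto | apply reflect_involutive_any; auto; apply Sx].
Qed.

Lemma continuity_pt_meridian N M (u : vec -> R) : (2 <= N)%nat -> cont_on_sphere N u ->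
  (forall y, sphere N y -> sphere N (mat_inv_apply N M y)) ->
  forall t, continuity_pt (fun t => rot N M u (circ_pt N t)) t.
Proof.
  intros HN Hc HM t. apply continuity_pt_locally. intros eps.
  assert (Hcoord : forall i, continuity_pt (fun s => mat_inv_apply N M (circ_pt N s) i) t).
  { intros i. unfold mat_inv_apply. destruct (Nat.ltb_spec i N).
    - apply continuity_pt_sumN. intros k Hk.
      apply (continuity_pt_ext (fun s => M k i * circ_pt N s k)); [reflexivity|].
      unfold circ_pt. apply continuity_pt_of_ex_derive.
      destruct (Nat.eqb k (N - 2)), (Nat.eqb k (N - 1)); auto_derive; auto.
    - apply continuity_pt_const. intros ? ?. reflexivity. }
  generalize (cont_on_sphere_curve N u Hc (fun s => mat_inv_apply N M (circ_pt N s)) t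
    (HM _ (sphere_circ_pt N t HN)) (fun i _ => Hcoord i) eps (cond_pos eps)).
  apply filter_imp. intros s Hs. apply Hs, HM, sphere_circ_pt, HN.
Qed.

Theorem lemma2p4 (N : nat) (u : vec -> R)
  (HN : (2 <= N)%nat)
  (Hcont : cont_on_sphere N u)
  (Hpos : forall x, sphere N x -> u x > 0)
  (Hnc : exists x y, sphere N x /\ sphere N y /\ u x <> u y)
  (Hsep : separable N u) :
  exists (M : nat -> nat -> R) (h1 h2 : R),
    orthogonal N M /\
    -1 <= h1 <= 1 /\ -1 <= h2 <= 1 /\
    (* (i) *)
    h1 > h2 /\
    (* (ii) *)
    (forall x, sphere N x ->
       ((forall y, sphere N y -> rot N M u y <= rot N M u x) <-> x (N - 1)%nat >= h1)) /\
    (forall x, sphere N x ->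
       ((forall y, sphere N y -> rot N M u x <= rot N M u y) <-> x (N - 1)%nat <= h2)) /\
    (* (iii) *)
    (forall h, -1 <= h <= 1 -> forall x y, sphere N x -> sphere N y ->
       x (N - 1)%nat = h -> y (N - 1)%nat = h -> rot N M u x = rot N M u y) /\
    (* (iv) *)
    (forall a b, PI / 2 <= a -> a <= b -> b <= 3 * PI / 2 ->
       rot N M u (circ_pt N b) <= rot N M u (circ_pt N a)).
Proof.
  destruct (separable_monotone_direction N u Hcont Hsep Hnc) as [e [Se Hmono]].
  destruct (rotate_to_last_axis N e HN Se) as [M [HM [Hrot Hsurj]]].
  destruct (zonal_level_sets N (rot N M u) HN) as [h1 [h2 H]].
  - intros x y Sx Sy Hle. unfold rot.
    destruct (Hrot x Sx), (Hrot y Sy). apply Hmono; auto; lra.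
  - apply continuity_pt_meridian; auto. intros y Sy. apply Hrot, Sy.
  - destruct Hnc as [x [y [Sx [Sy Hxy]]]].
    destruct (Hsurj x Sx) as [x' [Sx' <-]], (Hsurj y Sy) as [y' [Sy' <-]].
    exists x', y'. auto.
  - exists M, h1, h2. auto.
Qed.
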